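(* Let $r\ge4$ be an even integer and let $M$ be the binary matroid represented over $\mathrm{GF}(2)$ by the matrix $[I_r\;\;J_r-I_r]$, where $I_r$ is the $r\times r$ identity matrix and $J_r$ the $r\times r$ all-ones matrix. Then $M$ is not elementarily $(r,3)$-weakly base orderable.
   Context: An ordered pair $(B_1,B_2)$ of bases of a matroid has the elementary $k$-exchange property if there exist $k$-element subsets $X\subseteq B_1\setminus B_2$, $Y\subseteq B_2\setminus B_1$ and a bijection $\varphi\colon X\to Y$ such that $(B_1\setminus Z)\cup\varphi(Z)$ is a basis for every $Z\subseteq X$. A matroid is elementarily $(\alpha,k)$-weakly base orderable if every ordered pair $(B_1,B_2)$ of bases with $|B_1\setminus B_2|\ge\alpha$ has the elementary $k$-exchange property. *)

From HB Require Import structures.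
From mathcomp Require Import all_boot all_order all_algebra.
Set Implicit Arguments. Unset Strict Implicit. Unset Printing Implicit Defensive.
Import GRing.Theory.
Local Open Scope ring_scope.

(* Column matroid of a matrix A over a field F: the ground set is the set of
   column indices 'I_n; a set X of columns is independent iff the columns
   indexed by X are linearly independent, i.e. the span of those columns
   (the column space of A with the other columns zeroed out) has dimension #|X|. *)
Definition col_restrict (F : fieldType) m n (A : 'M[F]_(m, n)) (X : {set 'I_n})
  : 'M[F]_(m, n) := \matrix_(i, j) (if j \in X then A i j else 0).

Definition mx_indep (F : fieldType) m n (A : 'M[F]_(m, n)) (X : {set 'I_n}) : bool :=
  \rank (col_restrict A X) == #|X|.

Definition mx_basis (F : fieldType) m n (A : 'M[F]_(m, n)) (B : {set 'I_n}) : bool :=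
  mx_indep A B && [forall X : {set 'I_n}, (B \proper X) ==> ~~ mx_indep A X].

Definition elem_k_exchange (E : finType) (is_basis : {set E} -> bool)
  (k : nat) (B1 B2 : {set E}) : Prop :=
  exists (X Y : {set E}) (phi : E -> E),
    [/\ X \subset B1 :\: B2, Y \subset B2 :\: B1, #|X| = k & #|Y| = k] /\
    [/\ {in X &, injective phi}, phi @: X = Y &
        forall Z : {set E}, Z \subset X -> is_basis ((B1 :\: Z) :|: phi @: Z)].

Definition elem_wbo (E : finType) (is_basis : {set E} -> bool) (alpha k : nat) : Prop :=
  forall B1 B2 : {set E}, is_basis B1 -> is_basis B2 ->
    (alpha <= #|B1 :\: B2|)%N -> elem_k_exchange is_basis k B1 B2.

Definition MJ (r : nat) : 'M['F_2]_(r, r + r) :=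
  row_mx (1%:M) (const_mx 1 - 1%:M).

From mathcomp Require Import all_boot all_order all_algebra.
Set Implicit Arguments. Unset Strict Implicit. Unset Printing Implicit Defensive.
Import GRing.Theory.
Local Open Scope ring_scope.

(* Take B1 = {e_1, ..., e_r} (the identity columns) and B2 = {f_1, ..., f_r}
   with f_j = J e_j - e_j, a basis because r is even.  Let phi : X -> Y be any
   bijection between 3-subsets of B1 and B2 and write g(e_i) = e_j when
   phi(e_i) = f_j.  For Z ⊆ X with index set S, the indicator vector u of S
   annihilates e_k for k ∉ S, and u . f_j = |S| - [j ∈ S] (mod 2).  Hence
   (B1 \ Z) ∪ phi(Z) is dependent as soon as Z is nonempty and every z ∈ Z
   satisfies [g z ∈ Z] = |Z| mod 2.  Such a Z always exists for an injective g
   on a 3-set: X itself if g(X) ⊆ X; otherwise, for a with g a ∉ X, a fixed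
   point {y} or a pair {a, y}, since g cannot send both other points to a. *)

Lemma card3_parity_subset (T : finType) (X : {set T}) (g : T -> T) :
  #|X| = 3 -> {in X &, injective g} ->
  exists Z : {set T}, [/\ Z \subset X, Z != set0 &
                          {in Z, forall z, (g z \in Z) = odd #|Z|}].
Proof.
move=> cardX g_inj.
have [gX_sub_X | ] := boolP [forall z in X, g z \in X].
  exists X; split => //; first by rewrite -card_gt0 cardX.
  by move=> z zX; rewrite cardX (forall_inP gX_sub_X).
rewrite negb_forall_in => /exists_inP[a aX gaNX].
have [y yXa gyNa] : exists2 y, y \in X :\ a & g y != a.
  have /cards2P[b [c [bc Xa]]] : #|X :\ a| == 2.
    by move: cardX; rewrite (cardsD1 a) aX add1n => -[->].
  have /setD1P[_ bX] : b \in X :\ a by rewrite Xa !inE eqxx.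
  have /setD1P[_ cX] : c \in X :\ a by rewrite Xa !inE eqxx orbT.
  case: (eqVneq (g b) a) => [gba | ]; last by exists b; rewrite // Xa !inE eqxx.
  exists c; first by rewrite Xa !inE eqxx orbT.
  by apply: contraNneq bc => gca; apply/eqP/g_inj; rewrite ?gba ?gca.
have /setD1P[ya yX] := yXa.
case: (eqVneq (g y) y) => gyy.
  exists [set y]; split.
  - by rewrite sub1set.
  - by apply/set0Pn; exists y; rewrite set11.
  - by move=> z; rewrite inE cards1 => /eqP->; rewrite gyy set11.
exists [set a; y]; split.
- by apply/subsetP => z; rewrite !inE => /orP[]/eqP->.
- by apply/set0Pn; exists a; rewrite !inE eqxx.
- move=> z; rewrite cards2 eq_sym ya !inE => /orP[]/eqP->.
    by apply/negbTE; rewrite negb_or; apply/andP; split;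
      apply: contraNneq gaNX => ->.
  by rewrite (negbTE gyNa) (negbTE gyy).
Qed.

Section ColumnMatroid.
Variables (F : fieldType) (m n : nat) (A : 'M[F]_(m, n)).

Lemma mul_col_restrict (u : 'rV[F]_m) (B : {set 'I_n}) k :
  (u *m col_restrict A B) 0 k = if k \in B then (u *m A) 0 k else 0.
Proof.
rewrite !mxE; under eq_bigr do rewrite mxE.
by case: (k \in B); rewrite // big1 // => l _; rewrite mulr0.
Qed.

Lemma mx_basisE (B : {set 'I_n}) :
  #|B| = m -> mx_basis A B = row_free (col_restrict A B).
Proof.
move=> cardB; rewrite /mx_basis /mx_indep cardB /row_free.
case: eqP => //= _; apply/forallP => X; apply/implyP => /proper_card.
rewrite cardB => ltmX; apply/negP => /eqP rankX.
by have := rank_leq_row (col_restrict A X); rewrite rankX leqNgt ltmX.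
Qed.

Lemma mx_basis_inj (B : {set 'I_n}) : #|B| = m ->
  (forall u : 'rV[F]_m, u *m col_restrict A B = 0 -> u = 0) -> mx_basis A B.
Proof. by move=> cardB u_inj; rewrite mx_basisE //; exact: inj_row_free. Qed.

Lemma mx_basisN_orthogonal (B : {set 'I_n}) (u : 'rV[F]_m) :
  #|B| = m -> u != 0 -> {in B, forall k, (u *m A) 0 k = 0} -> ~~ mx_basis A B.
Proof.
move=> cardB u_neq0 uB; rewrite mx_basisE //; apply/negP => freeB.
have := mulmx_free_eq0 u freeB; rewrite (negbTE u_neq0).
suff -> : u *m col_restrict A B = 0 by rewrite eqxx.
apply/rowP => k; rewrite mul_col_restrict [RHS]mxE.
by case: ifPn => // kB; exact: uB.
Qed.

End ColumnMatroid.

Lemma F2_natr n : (n%:R : 'F_2) = (odd n)%:R.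
Proof. by rewrite -Fp_nat_mod // modn2. Qed.

Section MJ.
Variable r : nat.
Notation T := 'I_(r + r).

Definition col_index (k : T) : 'I_r :=
  match split k with inl i => i | inr j => j end.
Definition id_cols : {set T} := [set lshift r i | i : 'I_r].

Lemma col_index_lshift i : col_index (lshift r i) = i.
Proof. by rewrite /col_index (unsplitK (inl _ i)). Qed.

Lemma col_index_rshift i : col_index (rshift r i) = i.
Proof. by rewrite /col_index (unsplitK (inr _ i)). Qed.

Lemma lshift_id_cols i : lshift r i \in id_cols.
Proof. exact: imset_f. Qed.

Lemma rshift_id_colsN i : rshift r i \notin id_cols.
Proof.
apply/imsetP => -[j _ /(congr1 val) /= eq_ij].
by have := ltn_ord j; rewrite -eq_ij ltnNge leq_addr.
Qed.

Lemma id_colsP (k : T) :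
  if k \in id_cols then k = lshift r (col_index k) else k = rshift r (col_index k).
Proof.
case: (splitP k) => [i|j] val_k.
  have -> : k = lshift r i by apply: val_inj.
  by rewrite lshift_id_cols col_index_lshift.
have -> : k = rshift r j by apply: val_inj.
by rewrite (negbTE (rshift_id_colsN j)) col_index_rshift.
Qed.

Lemma card_id_cols : #|id_cols| = r.
Proof. by rewrite card_imset ?card_ord //; exact: lshift_inj. Qed.

Lemma card_id_colsC : #|~: id_cols| = r.
Proof. by rewrite cardsCs setCK card_id_cols card_ord addnK. Qed.

Lemma mul_MJ (u : 'rV['F_2]_r) k : (u *m MJ r) 0 k =
  if k \in id_cols then u 0 (col_index k) else \sum_l u 0 l - u 0 (col_index k).
Proof.
rewrite /MJ mul_mx_row mulmx1 mulmxBr mulmx1.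
have := id_colsP k; case: ifP => _ ->; rewrite ?row_mxEl ?row_mxEr.
  by rewrite col_index_lshift.
rewrite col_index_rshift !mxE; congr (_ - _).
by apply: eq_bigr => l _; rewrite mxE mulr1.
Qed.

Lemma MJ_basis_id_cols : mx_basis (MJ r) id_cols.
Proof.
apply: mx_basis_inj card_id_cols _ => u /rowP u0; apply/rowP => i.
have := u0 (lshift r i); rewrite mul_col_restrict mul_MJ lshift_id_cols.
by rewrite col_index_lshift !mxE.
Qed.

(* Each column of [J - I] equals the total sum minus one coordinate, so a
   dependency u is constant, and an even number of equal terms sums to 0. *)
Lemma MJ_basis_id_colsC : ~~ odd r -> mx_basis (MJ r) (~: id_cols).
Proof.
move=> r_even; apply: mx_basis_inj card_id_colsC _ => u /rowP u0.
have u_const j : u 0 j = \sum_l u 0 l.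
  have := u0 (rshift r j); rewrite mul_col_restrict inE rshift_id_colsN mul_MJ.
  rewrite (negbTE (rshift_id_colsN j)) col_index_rshift mxE.
  by move/eqP; rewrite subr_eq0 => /eqP.
have sum_u : \sum_l u 0 l = 0.
  under eq_bigr do rewrite u_const.
  by rewrite sumr_const card_ord -mulr_natr F2_natr (negbTE r_even) mulr0.
by apply/rowP => j; rewrite u_const sum_u mxE.
Qed.

Lemma MJ_exchange_not_basis (Z : {set T}) (phi : T -> T) :
  Z \subset id_cols -> Z != set0 -> {in Z &, injective phi} ->
  {in Z, forall z, phi z \notin id_cols} ->
  {in Z, forall z, (lshift r (col_index (phi z)) \in Z) = odd #|Z|} ->
  ~~ mx_basis (MJ r) ((id_cols :\: Z) :|: phi @: Z).
Proof.
move=> Z_id Z_neq0 phi_inj phiZ_N parityZ.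
pose u : 'rV['F_2]_r := \row_i (lshift r i \in Z)%:R.
have lshift_index z : z \in Z -> lshift r (col_index z) = z.
  by move=> zZ; have := id_colsP z; rewrite (subsetP Z_id z zZ) => <-.
have sum_u : \sum_l u 0 l = (odd #|Z|)%:R.
  rewrite -F2_natr -(card_in_imset (f := col_index)); last first.
    by move=> x y xZ yZ /(congr1 (lshift r)); rewrite !lshift_index.
  rewrite -sum1_card natr_sum [RHS]big_mkcond; apply: eq_bigr => i _.
  suff -> : (i \in col_index @: Z) = (lshift r i \in Z).
    by rewrite mxE; case: (_ \in Z).
  apply/imsetP/idP => [[z zZ ->] | iZ]; first by rewrite lshift_index.
  by exists (lshift r i); rewrite ?col_index_lshift.
apply: (mx_basisN_orthogonal (u := u)).
- have disj : [disjoint id_cols :\: Z & phi @: Z].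
    rewrite -setI_eq0; apply/eqP/setP => k; rewrite !inE.
    apply/negP => /andP[/andP[_ kid] /imsetP[z zZ kz]].
    by move: (phiZ_N z zZ); rewrite -kz kid.
  rewrite cardsU (disjoint_setI0 disj) cards0 subn0 cardsD (setIidPr Z_id).
  rewrite (card_in_imset phi_inj) card_id_cols subnK //.
  by have := subset_leq_card Z_id; rewrite card_id_cols.
- case/set0Pn: Z_neq0 => z zZ; apply/negP => /eqP/rowP/(_ (col_index z)).
  by rewrite !mxE lshift_index // zZ => /eqP; rewrite oner_eq0.
- move=> k /setUP[/setDP[kid kNZ] | /imsetP[z zZ ->]]; rewrite mul_MJ.
    by rewrite kid mxE; have := id_colsP k; rewrite kid => <-; rewrite (negbTE kNZ).
  by rewrite (negbTE (phiZ_N z zZ)) sum_u mxE parityZ // subrr.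
Qed.

End MJ.

Theorem theorem5p22 (r : nat) :
  ~~ odd r -> (4 <= r)%N -> ~ elem_wbo (mx_basis (MJ r)) r 3.
Proof.
move=> r_even _ wbo.
have := wbo _ _ (MJ_basis_id_cols r) (MJ_basis_id_colsC r_even).
rewrite setDE setCK setIid card_id_cols => /(_ (leqnn r)).
case=> X [Y [phi [[sX sY cardX _] [phi_inj phiXY exchange]]]].
rewrite setDE setCK setIid in sX.
have phiXN x : x \in X -> phi x \notin id_cols r.
  move=> xX; have : phi x \in Y by rewrite -phiXY imset_f.
  by move=> /(subsetP sY) /setDP [_].
pose g z := lshift r (col_index (phi z)).
have g_inj : {in X &, injective g}.
  move=> x y xX yX /lshift_inj eq_xy; apply: phi_inj => //.
  have := id_colsP (phi x); rewrite (negbTE (phiXN x xX)) => ->.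
  have := id_colsP (phi y); rewrite (negbTE (phiXN y yX)) => ->.
  by rewrite eq_xy.
have [Z [sZX Z_neq0 parityZ]] := card3_parity_subset cardX g_inj.
move: (exchange Z sZX); apply/negP; apply: MJ_exchange_not_basis => //.
- exact: subset_trans sZX sX.
- by move=> x y /(subsetP sZX) xX /(subsetP sZX) yX; exact: phi_inj.
- by move=> z /(subsetP sZX); exact: phiXN.
Qed.
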